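(* Let $G$ be an infinite finitely generated residually finite group, $S$ a finite symmetric generating set, and $(X_n)_{n\ge0}$ the lazy random walk on $\mathrm{Cay}(G,S)$. If $\sum_{k\ge2}\frac{1}{[G:\Lambda_k]}$ diverges, then $\lim_{n\to\infty}\mathbb{E}[D_G(X_n)]=\infty$.
   Context: For $g\ne e$, $D_G(g)=\min\{[G:N]: N\lhd G\text{ of finite index},\ g\notin N\}$, and $D_G(e)=0$. For $k\ge2$, $\Lambda_k$ is the intersection of all normal subgroups of $G$ of index at most $k$. The lazy random walk on $\mathrm{Cay}(G,S)$ is the Markov chain with $X_0=e$ and transition matrix $\frac12 I+\frac12P$, where $P(x,y)=\frac1{|S|}\#\{s\in S:y=xs\}$. *)

From mathcomp Require Import all_boot all_order all_algebra.
From mathcomp Require Import boolp reals.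
Set Implicit Arguments. Unset Strict Implicit. Unset Printing Implicit Defensive.
Import Order.TTheory GRing.Theory Num.Theory.

Record group := Group {
  carrier :> Type;
  gmul : carrier -> carrier -> carrier;
  ginv : carrier -> carrier;
  gone : carrier;
  gmulA : forall x y z, gmul x (gmul y z) = gmul (gmul x y) z;
  gmul1 : forall x, gmul gone x = x;
  gmulV : forall x, gmul (ginv x) x = gone
}.

Section GroupDefs.
Variable G : group.
Local Notation "x * y" := (gmul x y).
Local Notation "x ^-1" := (ginv x).
Local Notation e := (gone G).

Definition infinite_group : Prop :=
  forall n : nat, ~ exists f : 'I_n -> G, forall x : G, exists i, f i = x.

Definition normal_subgroup (N : G -> Prop) : Prop :=
  [/\ N e, (forall x y, N x -> N y -> N (x * y^-1))
    & (forall g x, N x -> N ((g^-1 * x) * g))].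

(* H has index m in G: there is a surjection G -> 'I_m whose fibres are
   exactly the left cosets of H, i.e. a bijection G/H ~ 'I_m. *)
Definition has_index (H : G -> Prop) (m : nat) : Prop :=
  exists f : G -> 'I_m, (forall i, exists x, f x = i) /\
     (forall x y, f x = f y <-> H (x^-1 * y)).

Definition finite_index_normal (N : G -> Prop) : Prop :=
  normal_subgroup N /\ exists m, has_index N m.

Definition residually_finite : Prop :=
  forall g : G, g <> e -> exists N, finite_index_normal N /\ ~ N g.

Lemma exists_asbool (P : nat -> Prop) : (exists m, P m) -> exists m, `[< P m >].
Proof. by case=> m Pm; exists m; apply/asboolP. Qed.

Definition least_nat (P : nat -> Prop) : nat :=
  match pselect (exists m, P m) with
  | left h => ex_minn (exists_asbool h)
  | right _ => 0%N
  end.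

(* [G : H] as a natural number (0 if the index is infinite). *)
Definition gindex (H : G -> Prop) : nat := least_nat (has_index H).

(* D_G(g) = min{[G:N] : N normal of finite index, g \notin N}; the minimum
   over the empty set (g = e) is 0, matching D_G(e) = 0. *)
Definition D (g : G) : nat :=
  least_nat (fun m => exists N, normal_subgroup N /\ has_index N m /\ ~ N g).

Definition Lambda (k : nat) : G -> Prop :=
  fun x => forall N, normal_subgroup N ->
             (exists m, (m <= k)%N /\ has_index N m) -> N x.

Definition symmetric_gens k (gens : 'I_k -> G) : Prop :=
  forall i, exists j, gens j = (gens i)^-1.

Definition word_prod k (gens : 'I_k -> G) (w : seq 'I_k) : G :=
  foldl (fun a i => a * gens i) e w.

Definition generates k (gens : 'I_k -> G) : Prop :=
  forall x : G, exists w : seq 'I_k, x = word_prod gens w.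

(* Lazy random walk: each step is None (stay, prob 1/2) or Some i
   (multiply on the right by gens i, prob 1/(2|S|)). *)
Definition lazy_step k (gens : 'I_k -> G) (x : G) (s : option 'I_k) : G :=
  match s with None => x | Some i => x * gens i end.

Definition walk_pos k (gens : 'I_k -> G) n (w : n.-tuple (option 'I_k)) : G :=
  foldl (lazy_step gens) e w.

Definition step_prob (R : realType) k (s : option 'I_k) : R :=
  match s with None => 2^-1 | Some _ => (2 * k%:R)^-1 end%R.

Definition lazy_walk_expect (R : realType) k (gens : 'I_k -> G) (f : G -> R)
    (n : nat) : R :=
  (\sum_(w : n.-tuple (option 'I_k))
      (\prod_(i < n) step_prob R (tnth w i)) * f (walk_pos gens w))%R.

End GroupDefs.

(* Modulo a normal subgroup [N] of index [m], the lazy walk is a lazy walk on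
   the finite Cayley graph of [G/N].  A Doeblin bound (from anywhere, every
   coset is hit within [D] steps with probability at least [(2k)^-D]) makes it
   contract oscillations geometrically, so [P(X_n \in N) -> 1/m].
   If [y <> e] lies in [Lambda_j] then [D(y) > j], hence
   [D(y) >= #{2 <= j < K | y \in Lambda_j} - K 1_N(y)] for every [y], where [N]
   is a normal subgroup of index [>= 3(K+1)] (it exists because [G] is infinite
   and residually finite) and the correction term takes care of [y = e].
   Taking expectations, [E D(X_n) >= sum_(2 <= j < K) 1/[G:Lambda_j] - 1] for
   large [n], and the divergence of the series concludes. *)

From mathcomp Require Import all_boot all_order all_algebra.
From mathcomp Require Import boolp reals.
From mathcomp Require Import ring lra zify.
Set Implicit Arguments. Unset Strict Implicit. Unset Printing Implicit Defensive.
Import Order.TTheory GRing.Theory Num.Theory.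

Section GroupFacts.
Variable G : group.
Local Notation "x * y" := (gmul x y).
Local Notation "x ^-1" := (ginv x).
Local Notation e := (gone G).

Lemma gmulI (x y z : G) : x * y = x * z -> y = z.
Proof. by move=> E; rewrite -[y]gmul1 -(gmulV x) -gmulA E gmulA gmulV gmul1. Qed.

Lemma gmulVr (x : G) : x * x^-1 = e.
Proof.
have idem : (x * x^-1) * (x * x^-1) = x * x^-1.
  by rewrite -gmulA (gmulA x^-1) gmulV gmul1.
by rewrite -[LHS]gmul1 -(gmulV (x * x^-1)) -gmulA idem.
Qed.

Lemma gmul1r (x : G) : x * e = x.
Proof. by rewrite -(gmulV x) gmulA gmulVr gmul1. Qed.

Lemma ginv1 : e^-1 = e.
Proof. by rewrite -[LHS]gmul1r gmulV. Qed.

Lemma gmulKV (x y : G) : x * (x^-1 * y) = y.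
Proof. by rewrite gmulA gmulVr gmul1. Qed.

Lemma ginvM (x y : G) : (x * y)^-1 = y^-1 * x^-1.
Proof.
by apply: (@gmulI (x * y)); rewrite gmulVr -gmulA (gmulA y) gmulVr gmul1 gmulVr.
Qed.

Lemma eq_gmulV1 (x y : G) : x^-1 * y = e -> x = y.
Proof. by move=> E; rewrite -(gmulKV x y) E gmul1r. Qed.

End GroupFacts.

Section Index.
Variable G : group.
Local Notation "x * y" := (gmul x y).
Local Notation "x ^-1" := (ginv x).
Local Notation e := (gone G).

Lemma normal_subgroupI (H K : G -> Prop) :
  normal_subgroup H -> normal_subgroup K -> normal_subgroup (fun x => H x /\ K x).
Proof.
case=> H1 HB HJ [K1 KB KJ]; split=> [//|x y [Hx Kx] [Hy Ky]|g x [Hx Kx]].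
  by split; [apply: HB | apply: KB].
by split; [apply: HJ | apply: KJ].
Qed.

Lemma normal_subgroup_Lambda j : normal_subgroup (@Lambda G j).
Proof.
split=> [N [] //|x y Lx Ly N nN idxN|g x Lx N nN idxN]; case: (nN) => _ NB NJ.
  exact: NB (Lx N nN idxN) (Ly N nN idxN).
exact: NJ (Lx N nN idxN).
Qed.

Lemma has_index_fibres (T : finType) (f : G -> T) (H : G -> Prop) :
  (forall x y, f x = f y <-> H (x^-1 * y)) -> exists m, has_index H m.
Proof.
move=> fibre; pose S := [set t | `[< exists x, f x = t >]].
have fS x : f x \in S by rewrite inE; apply/asboolP; exists x.
exists #|S|, (fun x => enum_rank_in (fS e) (f x)); split=> [i|x y].
  have /[!inE] /asboolP[x fx] := enum_valP i.
  by exists x; rewrite fx enum_valK_in.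
rewrite -fibre; split=> [E|->] //.
by rewrite -(enum_rankK_in (fS e) (fS x)) E enum_rankK_in.
Qed.

Lemma has_index_meet (H K : G -> Prop) m n :
  has_index H m -> has_index K n -> exists p, has_index (fun x => H x /\ K x) p.
Proof.
move=> [f [_ fibreH]] [g [_ fibreK]].
apply: (@has_index_fibres _ (fun x => (f x, g x))) => x y.
by rewrite -fibreH -fibreK; split=> [[-> ->] | [-> ->]].
Qed.

Lemma not_injective_to_ord : infinite_group G ->
  forall m (f : G -> 'I_m), ~ injective f.
Proof.
move=> infG m f f_inj; apply: (infG m).
exists (fun i => if pselect (exists x, f x = i) is left ex then projT1 (cid ex) else e).
move=> x; exists (f x); case: pselect => [ex|]; last by case; exists x.
by apply: f_inj; exact: projT2 (cid ex).
Qed.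

Lemma has_index_nontrivial (N : G -> Prop) m : infinite_group G ->
  has_index N m -> exists g, N g /\ g <> e.
Proof.
move=> infG [f [_ fibre]]; apply: contrapT => /forallNP trivN.
apply: (not_injective_to_ord infG (f := f)) => x y /fibre Nxy.
apply: eq_gmulV1; apply: contrapT => ne1; exact: trivN (conj Nxy ne1).
Qed.

(* The induced map from K-cosets onto H-cosets identifies the classes of [e]
   and [g]. *)
Lemma has_index_ltn (H K : G -> Prop) m n g :
  has_index H m -> has_index K n -> (forall x, K x -> H x) -> H g -> ~ K g ->
  (m < n)%N.
Proof.
move=> [f [f_surj fibreH]] [h [h_surj fibreK]] KH Hg Kg.
have [rep repK] := choice h_surj.
have f_rep x : f (rep (h x)) = f x by apply/fibreH/KH/fibreK.
pose phi (i : 'I_n) := f (rep i).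
have phi_onto : #|codom phi| = m.
  rewrite -[RHS]card_ord; apply: eq_card => j; rewrite inE.
  have [x <-] := f_surj j; apply/codomP; exists (h x); exact/esym/f_rep.
have not_inj : ~ injective phi.
  move=> phi_inj; have /phi_inj : phi (h e) = phi (h g).
    by rewrite /phi !f_rep; apply/fibreH; rewrite ginv1 gmul1.
  by move/fibreK; rewrite ginv1 gmul1.
rewrite -phi_onto -[X in (_ < X)%N]card_ord ltn_neqAle leq_image_card andbT.
by apply/negP => /image_injP phi_inj; apply: not_inj => x y; apply: phi_inj.
Qed.

Lemma exists_normal_large_index : infinite_group G -> residually_finite G ->
  forall L, exists (N : G -> Prop) m,
    [/\ normal_subgroup N, has_index N m & (L <= m)%N].
Proof.
move=> infG rfG; elim=> [|L [N [m [nN idxN Lm]]]].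
  exists (fun _ => True), 1%N; split=> //.
  by exists (fun _ => ord0); split=> [i|//]; exists e; rewrite [i]ord1.
have [g [Ng g1]] := has_index_nontrivial infG idxN.
have [M [[nM [n idxM]] Mg]] := rfG g g1.
have [p idxNM] := has_index_meet idxN idxM.
exists (fun x => N x /\ M x), p; split; first exact: normal_subgroupI.
  exact: idxNM.
by apply: leq_ltn_trans Lm (has_index_ltn idxN idxNM _ Ng _) => [x []|[]].
Qed.

End Index.

Lemma least_natP (P : nat -> Prop) : (exists m, P m) -> P (least_nat P).
Proof. by rewrite /least_nat; case: pselect => // ex _; case: ex_minnP => m /asboolP. Qed.

Lemma least_nat_none (P : nat -> Prop) : ~ (exists m, P m) -> least_nat P = 0%N.
Proof. by rewrite /least_nat; case: pselect. Qed.

Lemma Lambda_lt_D (G : group) (x : G) j : residually_finite G ->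
  x <> gone G -> Lambda j x -> (j < D x)%N.
Proof.
move=> rfG x1 Lx; have [N [[nN [m idxN]] Nx]] := rfG x x1.
have exD : exists m N, normal_subgroup N /\ has_index N m /\ ~ N x.
  by exists m, N.
have [N' [nN' [idxN' N'x]]] := least_natP exD.
rewrite ltnNge; apply/negP => Dj; apply: N'x; apply: Lx nN' _.
by exists (D x).
Qed.

Lemma sum_nat_lt_le (K d : nat) : (\sum_(2 <= j < K) (j < d : nat) <= d)%N.
Proof.
suff: (\sum_(2 <= j < K) (j < d : nat) <= minn K d)%N.
  by move/leq_trans; apply; exact: geq_minr.
elim: K => [|K IH]; first by rewrite big_geq.
have [K2|K2] := ltnP K 2; first by rewrite big_geq.
by rewrite big_nat_recr //=; move: IH; case: ltnP; lia.
Qed.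

Local Open Scope ring_scope.

Lemma sum_option (R : nmodType) (T : finType) (F : option T -> R) :
  \sum_(s : option T) F s = F None + \sum_(t : T) F (Some t).
Proof.
rewrite /index_enum !unlock /=; congr (_ + _).
by rewrite /reducebig foldr_map Finite.enum.unlock.
Qed.

Lemma sum_tuple_cons (R : nmodType) (T : finType) n (F : n.+1.-tuple T -> R) :
  \sum_(w : n.+1.-tuple T) F w = \sum_(s : T) \sum_(w : n.-tuple T) F [tuple of s :: w].
Proof.
rewrite pair_big /= (reindex (fun p : T * n.-tuple T => [tuple of p.1 :: p.2])) //.
exists (fun t : n.+1.-tuple T => (thead t, [tuple of behead t])).
  by case=> x t _ /=; rewrite theadE; congr pair; apply: val_inj.
by move=> t _; rewrite [RHS]tuple_eta; apply: val_inj.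
Qed.

Definition indicator {R : realType} {T : Type} (P : T -> Prop) (y : T) : R :=
  (`[< P y >])%:R.

Definition band (T : Type) (R : numDomainType) (g : T -> R) (lo w : R) :=
  forall x, lo <= g x <= lo + w.

Lemma exists_expr_le (R : archiRealFieldType) (x eps : R) : 0 <= x < 1 -> 0 < eps ->
  exists q, x ^+ q <= eps.
Proof.
move=> /andP[x_ge0 x_lt1] eps_gt0.
have [d d_gt0 xE] : exists2 d, 0 < d & x = 1 - d.
  by exists (1 - x); rewrite ?subr_gt0 // opprB addrC subrK.
have bernoulli q : x ^+ q * (1 + q%:R * d) <= 1.
  elim: q => [|q IH]; first by rewrite expr0 mul0r addr0 mulr1.
  have xq_ge0 : 0 <= x ^+ q by rewrite exprn_ge0.
  have d_ge0 := ltW d_gt0.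
  have : 0 <= x ^+ q * ((q%:R + 1) * (d * d)) by rewrite !mulr_ge0 ?addr_ge0.
  rewrite exprS -addn1 natrD; nra.
have [q q_gt] : exists q, (d * eps)^-1 < q%:R.
  by exists (Num.Def.archi_bound (d * eps)^-1); rewrite archi_boundP // invr_ge0 ltW ?mulr_gt0.
exists q; have := bernoulli q; have xq_ge0 : 0 <= x ^+ q by rewrite exprn_ge0.
have de_gt0 : 0 < d * eps by rewrite mulr_gt0.
move: q_gt; rewrite -div1r ltr_pdivrMr //; nra.
Qed.

Definition eventually (P : nat -> Prop) := exists n0, forall n, (n0 <= n)%N -> P n.

Lemma eventually_and (P Q : nat -> Prop) :
  eventually P -> eventually Q -> eventually (fun n => P n /\ Q n).
Proof.
move=> [n1 P_n] [n2 Q_n]; exists (maxn n1 n2) => n.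
by rewrite geq_max => /andP[/P_n ? /Q_n ?].
Qed.

Lemma eventually_all_lt (P : nat -> nat -> Prop) K :
  (forall j, eventually (P j)) -> eventually (fun n => forall j, (j < K)%N -> P j n).
Proof.
move=> evP; elim: K => [|K [n1 P_n]]; first by exists 0%N.
have [n2 PK_n] := evP K; exists (maxn n1 n2) => n; rewrite geq_max => /andP[n1n n2n] j.
by rewrite ltnS leq_eqVlt => /orP[/eqP->|jK]; [apply: PK_n | apply: P_n].
Qed.

Section Walk.
Variables (R : realType) (G : group) (k : nat) (gens : 'I_k -> G).
Hypothesis k_gt0 : (0 < k)%N.
Local Notation e := (gone G).

Definition walk_op (h : G -> R) (x : G) : R :=
  \sum_(s : option 'I_k) step_prob R s * h (lazy_step gens x s).

Lemma step_prob_ge0 (s : option 'I_k) : 0 <= step_prob R s.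
Proof. by case: s => [i|] /=; rewrite invr_ge0 // mulr_ge0. Qed.

Lemma sum_step_prob : \sum_(s : option 'I_k) step_prob R s = 1.
Proof.
rewrite sum_option /= sumr_const card_ord -mulr_natr.
by field; rewrite pnatr_eq0 -lt0n.
Qed.

Lemma lazy_walk_expectE (h : G -> R) n :
  lazy_walk_expect gens h n = iter n walk_op h e.
Proof.
rewrite /lazy_walk_expect /walk_pos; elim: n e => [|n IH] x.
  rewrite (eq_bigr (fun=> h x)) => [|w _]; last by rewrite big_ord0 mul1r tuple0.
  by rewrite sumr_const card_tuple expn0.
rewrite sum_tuple_cons iterS; apply: eq_bigr => s _.
rewrite -IH mulr_sumr; apply: eq_bigr => w _.
rewrite big_ord_recl tnth0 /= -mulrA; congr (_ * (_ * _)).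
by apply: eq_bigr => i _; rewrite tnthS.
Qed.

Lemma iter_walk_le n (h1 h2 : G -> R) : (forall y, h1 y <= h2 y) ->
  forall x, iter n walk_op h1 x <= iter n walk_op h2 x.
Proof.
elim: n => [//|n IH] le_h x /=; apply: ler_sum => s _.
by rewrite ler_wpM2l ?step_prob_ge0 ?IH.
Qed.

Lemma iter_walk_lin n (h1 h2 : G -> R) b x :
  iter n walk_op (fun y => h1 y - b * h2 y) x = iter n walk_op h1 x - b * iter n walk_op h2 x.
Proof.
elim: n x => [//|n IH] x /=; rewrite /walk_op mulr_sumr -sumrB.
by apply: eq_bigr => s _ /=; rewrite IH; ring.
Qed.

Lemma iter_walk_sum n (I : Type) (r : seq I) (F : I -> G -> R) x :
  iter n walk_op (fun y => \sum_(i <- r) F i y) x = \sum_(i <- r) iter n walk_op (F i) x.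
Proof.
elim: n x => [//|n IH] x /=; rewrite /walk_op exchange_big /=.
by apply: eq_bigr => s _; rewrite IH mulr_sumr.
Qed.

Lemma iter_walk_cst n a x : iter n walk_op (fun=> a) x = a.
Proof.
elim: n x => [//|n IH] x /=; rewrite /walk_op (eq_bigr (fun s => step_prob R s * a)).
  by rewrite -mulr_suml sum_step_prob mul1r.
by move=> s _; rewrite IH.
Qed.

Lemma iter_walk_affine n a b (h : G -> R) x :
  iter n walk_op (fun y => a - b * h y) x = a - b * iter n walk_op h x.
Proof. by rewrite (iter_walk_lin n (fun=> a)) iter_walk_cst. Qed.

Lemma band_iter_walk n (g : G -> R) lo w :
  band g lo w -> band (iter n walk_op g) lo w.
Proof.
move=> g_band x; rewrite -{1}(iter_walk_cst n lo x) -(iter_walk_cst n (lo + w) x).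
by rewrite !iter_walk_le // => y; case/andP: (g_band y).
Qed.

Lemma iter_walk_mulg n (h : G -> R) r x :
  iter n walk_op (fun y => h (gmul r y)) x = iter n walk_op h (gmul r x).
Proof.
by elim: n x => [//|n IH] x /=; apply: eq_bigr => -[i|] _ /=; rewrite IH ?gmulA.
Qed.

Definition gen_prob : R := (2 * k%:R)^-1.

Lemma gen_prob_gt0 : 0 < gen_prob.
Proof. by rewrite invr_gt0 mulr_gt0 // ltr0n. Qed.

Lemma gen_prob_le_half : gen_prob <= 2^-1.
Proof. by rewrite /gen_prob invfM ler_piMr ?invr_ge0 // invf_le1 ?ler1n ?ltr0n. Qed.

Lemma walk_op_ge_step (h : G -> R) x s : (forall y, 0 <= h y) ->
  step_prob R s * h (lazy_step gens x s) <= walk_op h x.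
Proof.
move=> h_ge0; rewrite /walk_op (bigD1 s) //= lerDl sumr_ge0 // => t _.
by rewrite mulr_ge0 ?step_prob_ge0.
Qed.

Lemma word_prod_cons s v : word_prod gens (s :: v) = gmul (gens s) (word_prod gens v).
Proof.
rewrite /word_prod /= gmul1; elim: v (gens s) => [|t v IH] x /=.
  by rewrite gmul1r.
by rewrite IH (IH (gmul e _)) gmul1 gmulA.
Qed.

(* Words shorter than [n] are padded with lazy steps, which are more likely
   than any generator step. *)
Lemma iter_walk_word n (v : seq 'I_k) (h : G -> R) x :
  (size v <= n)%N -> (forall y, 0 <= h y) ->
  gen_prob ^+ n * h (gmul x (word_prod gens v)) <= iter n walk_op h x.
Proof.
move=> + h_ge0; elim: n v x => [|n IH] v x.
  by rewrite leqn0 => /nilP ->; rewrite /word_prod /= gmul1r mul1r.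
have iter_ge0 y : 0 <= iter n walk_op h y.
  by rewrite -(iter_walk_cst n 0 y) iter_walk_le.
rewrite exprS -mulrA /=; case: v => [|s v] /= v_n.
  apply: le_trans (walk_op_ge_step x None iter_ge0) => /=.
  have c_ge0 := ltW gen_prob_gt0.
  by apply: ler_pM; rewrite ?gen_prob_le_half ?IH ?mulr_ge0 ?exprn_ge0.
apply: le_trans (walk_op_ge_step x (Some s) iter_ge0).
by rewrite ler_wpM2l ?(ltW gen_prob_gt0) // word_prod_cons gmulA IH.
Qed.

End Walk.

Section CosetWalk.
Variables (R : realType) (G : group) (k : nat) (gens : 'I_k -> G).
Hypotheses (k_gt0 : (0 < k)%N) (gens_gen : generates gens).
Variables (N : G -> Prop) (m : nat) (f : G -> 'I_m).
Hypotheses (nN : normal_subgroup N) (f_surj : forall i, exists x, f x = i).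
Hypothesis f_fibre : forall x y, f x = f y <-> N (gmul (ginv x) y).
Local Notation e := (gone G).
Local Notation walk n h := (iter n (@walk_op R G k gens) h).

Lemma f_mulg x y g : f x = f y -> f (gmul x g) = f (gmul y g).
Proof.
case: nN => _ _ NJ /f_fibre /(NJ g) Nxy; apply/f_fibre.
by move: Nxy; rewrite ginvM -!gmulA.
Qed.

Definition coset_const (h : G -> R) := forall x y, f x = f y -> h x = h y.

Lemma coset_const_iter n h : coset_const h -> coset_const (walk n h).
Proof.
move=> h_const; elim: n => [//|n IH] x y fxy /=.
by apply: eq_bigr => -[i|] _ /=; rewrite (IH _ _ (f_mulg _ fxy), IH _ _ fxy).
Qed.

Definition in_coset (z y : G) : R := (f y == f z)%:R.

Lemma coset_const_in_coset z : coset_const (in_coset z).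
Proof. by move=> x y fxy; rewrite /in_coset fxy. Qed.

Lemma exists_coset_hitting_bound :
  exists D, forall z x, gen_prob R k ^+ D <= walk D (in_coset z) x.
Proof.
have [rep repK] := choice f_surj.
have [v v_rep] : {v : 'I_m * 'I_m -> seq 'I_k &
    forall p, gmul (rep p.1) (word_prod gens (v p)) = rep p.2}.
  apply: (choice (P := fun p w => gmul (rep p.1) (word_prod gens w) = rep p.2)) => p.
  have [w wE] := gens_gen (gmul (ginv (rep p.1)) (rep p.2)).
  by exists w; rewrite -wE gmulKV.
exists (\max_(p : 'I_m * 'I_m) size (v p))%N => z x.
rewrite (coset_const_iter _ (coset_const_in_coset z) (esym (repK (f x)))).
have in_coset_ge0 y : 0 <= in_coset z y by rewrite ler0n.
apply: le_trans (iter_walk_word gens k_gt0 _ (leq_bigmax (f x, f z)) in_coset_ge0).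
by rewrite (v_rep (f x, f z)) /in_coset repK eqxx mulr1.
Qed.

Section Contraction.
Variables (D : nat) (delta : R).
Hypothesis hit : forall z x, delta <= walk D (in_coset z) x.

(* The coset of [e] receives mass at least [delta] from everywhere, so the
   upper and lower envelopes of [g] are both pulled towards [g e]. *)
Lemma band_contract g lo w : coset_const g -> band g lo w ->
  band (walk D g) (lo + delta * (g e - lo)) ((1 - delta) * w).
Proof.
move=> g_const g_band x; have hit_x := hit e x.
have [lo_ge ge_hi] := andP (g_band e).
have upper y : g y <= (lo + w) - (lo + w - g e) * in_coset e y.
  rewrite /in_coset; case: eqP => [/g_const ->|_] /=; rewrite ?mulr1n ?mulr0n; first lra.
  by rewrite mulr0 subr0; case/andP: (g_band y).
have lower y : lo - (lo - g e) * in_coset e y <= g y.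
  rewrite /in_coset; case: eqP => [/g_const ->|_] /=; rewrite ?mulr1n ?mulr0n; first lra.
  by rewrite mulr0 subr0; case/andP: (g_band y).
have := iter_walk_le gens D upper x; have := iter_walk_le gens D lower x.
rewrite !iter_walk_affine //; nra.
Qed.

Lemma band_iter_in_coset q :
  exists lo, band (walk (q * D) (in_coset e)) lo ((1 - delta) ^+ q).
Proof.
elim: q => [|q [lo lo_band]].
  by exists 0 => x; rewrite add0r expr0 ler0n lern1 leq_b1.
exists (lo + delta * (walk (q * D) (in_coset e) e - lo)).
rewrite mulSn iterD exprS; apply: band_contract lo_band.
exact: coset_const_iter (coset_const_in_coset e).
Qed.

End Contraction.

Lemma sum_in_coset_reps (rep : 'I_m -> G) n : cancel rep f ->
  \sum_(i < m) walk n (in_coset e) (rep i) = 1.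
Proof.
move=> repK; transitivity (walk n (fun y => \sum_(i < m) in_coset e (gmul (rep i) y)) e).
  by rewrite iter_walk_sum; apply: eq_bigr => i _; rewrite iter_walk_mulg gmul1r.
rewrite -(iter_walk_cst gens k_gt0 n 1 e); congr (walk n _ e); apply: funext => y.
have in_cosetE i : in_coset e (gmul (rep i) y) = (i == f (ginv y))%:R.
  rewrite /in_coset; congr (nat_of_bool _)%:R; rewrite -[i in RHS]repK.
  apply/eqP/eqP => fiy; last by rewrite (f_mulg y fiy) gmulV.
  by have := f_mulg (ginv y) fiy; rewrite -gmulA gmulVr gmul1r gmul1.
rewrite (eq_bigr _ (fun i _ => in_cosetE i)) (bigD1 (f (ginv y))) //= eqxx.
by rewrite big1 ?addr0 // => i /negbTE ->.
Qed.

Lemma walk_in_coset_cvg (eps : R) : 0 < eps ->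
  eventually (fun n => `|walk n (in_coset e) e - m%:R^-1| <= eps).
Proof.
move=> eps_gt0; have [D hitD] := exists_coset_hitting_bound.
set delta := gen_prob R k ^+ D in hitD.
have delta_gt0 : 0 < delta by rewrite exprn_gt0 ?gen_prob_gt0.
have delta_le1 : delta <= 1.
  rewrite exprn_ile1 ?(ltW (gen_prob_gt0 _ k_gt0)) //.
  by rewrite (le_trans (gen_prob_le_half _ k_gt0)) // invf_le1 ?ler1n.
have [q q_eps] : exists q, (1 - delta) ^+ q <= eps.
  by apply: exists_expr_le => //; rewrite subr_ge0 delta_le1 ltrBlDr ltrDl.
exists (q * D)%N => n qD_n; have [lo lo_band] := band_iter_in_coset hitD q.
have n_band := band_iter_walk gens k_gt0 (n - q * D)%N lo_band.
rewrite -iterD subnK // in n_band.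
have [rep repK] := choice f_surj.
have mean := sum_in_coset_reps n repK.
set g := walk n (in_coset e) in n_band mean *; set w := (1 - delta) ^+ q in q_eps n_band.
have m_gt0 : (0 < m)%N := leq_ltn_trans (leq0n _) (ltn_ord (f e)).
have sum_lo : \sum_(i < m) lo <= \sum_(i < m) g (rep i).
  by apply: ler_sum => i _; have /andP[] := n_band (rep i).
have sum_hi : \sum_(i < m) g (rep i) <= \sum_(i < m) (lo + w).
  by apply: ler_sum => i _; have /andP[] := n_band (rep i).
rewrite mean !sumr_const card_ord in sum_lo sum_hi.
rewrite -[lo *+ m]mulr_natr in sum_lo; rewrite -[(lo + w) *+ m]mulr_natr in sum_hi.
have m_pos : 0 < m%:R :> R by rewrite ltr0n.
have lo_m : lo <= m%:R^-1 by rewrite -div1r ler_pdivlMr.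
have m_hi : m%:R^-1 <= lo + w by rewrite -div1r ler_pdivrMr.
by have /andP[] := n_band e; rewrite ler_norml; lra.
Qed.

End CosetWalk.

Lemma D_ge_Lambda_count (R : realType) (G : group) (N : G -> Prop) K y :
  residually_finite G -> normal_subgroup N ->
  \sum_(2 <= j < K) indicator (@Lambda G j) y - K%:R * indicator N y <= (D y)%:R :> R.
Proof.
move=> rfG [N1 _ _]; case: (pselect (N y)) => [Ny|Ny].
  have : \sum_(2 <= j < K) indicator (@Lambda G j) y <= \sum_(2 <= j < K) (1 : R).
    by apply: ler_sum => j _; rewrite lern1 leq_b1.
  rewrite sumr_const_nat /indicator (asboolT Ny) mulr1.
  have : (K - 2)%:R <= K%:R :> R by rewrite ler_nat leq_subr.
  have : 0 <= (D y)%:R :> R by rewrite ler0n.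
  lra.
have y1 : y <> gone G by move=> y1; apply: Ny; rewrite y1.
rewrite /indicator (asboolF Ny) mulr0 subr0.
apply: le_trans (_ : _ <= \sum_(2 <= j < K) (j < D y)%N%:R) _.
  apply: ler_sum => j _; case: (pselect (Lambda j y)) => [Lj|Lj].
    by rewrite (asboolT Lj) (Lambda_lt_D rfG y1 Lj).
  by rewrite (asboolF Lj) ler0n.
by rewrite -natr_sum ler_nat sum_nat_lt_le.
Qed.

Section WalkProb.
Variables (R : realType) (G : group) (k : nat) (gens : 'I_k -> G).
Hypotheses (k_gt0 : (0 < k)%N) (gens_gen : generates gens).

Lemma lazy_walk_prob_cvg (N : G -> Prop) m (eps : R) :
  normal_subgroup N -> has_index N m -> 0 < eps ->
  eventually (fun n => `|lazy_walk_expect gens (indicator N) n - m%:R^-1| <= eps).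
Proof.
move=> nN [f [f_surj f_fibre]] eps_gt0.
have -> : indicator N = in_coset R f (gone G).
  apply: funext => y; rewrite /indicator /in_coset; congr (nat_of_bool _)%:R.
  by apply/asboolP/eqP => [Ny|/esym/f_fibre]; [apply/esym/f_fibre|]; rewrite ginv1 gmul1.
have [n0 cvg] := walk_in_coset_cvg k_gt0 gens_gen nN f_surj f_fibre eps_gt0.
by exists n0 => n /cvg; rewrite lazy_walk_expectE.
Qed.

Lemma lazy_walk_prob_ge_inv_index (N : G -> Prop) (eps : R) :
  normal_subgroup N -> 0 < eps ->
  eventually (fun n => (gindex N)%:R^-1 - eps <= lazy_walk_expect gens (indicator N) n).
Proof.
move=> nN eps_gt0; case: (pselect (exists m, has_index N m)) => [idx|no_idx].
  have [n0 cvg] := lazy_walk_prob_cvg nN (least_natP idx) eps_gt0.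
  by exists n0 => n /cvg; rewrite ler_norml => /andP[]; lra.
(* With no finite index, [gindex N = 0] and the junk value [0^-1 = 0] is trivial. *)
exists 0%N => n _; rewrite /gindex least_nat_none // invr0 sub0r lazy_walk_expectE.
rewrite -(iter_walk_cst gens k_gt0 n (- eps) (gone G)) iter_walk_le // => y.
by rewrite (le_trans _ (ler0n _ _)) // oppr_le0 ltW.
Qed.

Lemma lazy_walk_expect_D_ge (N : G -> Prop) K n :
  residually_finite G -> normal_subgroup N ->
  \sum_(2 <= j < K) lazy_walk_expect gens (indicator (@Lambda G j)) n
    - K%:R * lazy_walk_expect gens (indicator N) n
  <= lazy_walk_expect gens (fun y => (D y)%:R) n :> R.
Proof.
move=> rfG nN; rewrite !lazy_walk_expectE; under eq_bigr do rewrite lazy_walk_expectE.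
rewrite -iter_walk_sum -iter_walk_lin.
exact: iter_walk_le (fun y => D_ge_Lambda_count R K y rfG nN) _.
Qed.

End WalkProb.

Lemma gens_nonempty (G : group) k (gens : 'I_k -> G) :
  infinite_group G -> generates gens -> (0 < k)%N.
Proof.
case: k gens => [|//] gens infG gens_gen; case: (infG 1%N).
by exists (fun=> gone G) => x; have [[|[]//] ->] := gens_gen x; exists ord0.
Qed.

Theorem corollary4p2 (R : realType) (G : group) (k : nat) (gens : 'I_k -> G) :
  infinite_group G ->
  residually_finite G ->
  injective gens ->
  symmetric_gens gens ->
  generates gens ->
  (forall M : R, exists K : nat,
      (M < \sum_(2 <= j < K) ((gindex (@Lambda G j))%:R)^-1)%R) ->
  forall M : R, exists N : nat, forall n : nat, (N <= n)%N ->
    (M < lazy_walk_expect gens (fun g => (D g)%:R) n)%R.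
Proof.
move=> infG rfG _ _ gens_gen sum_div M.
have k_gt0 := gens_nonempty infG gens_gen.
have [K sum_gt] := sum_div (M + 1).
(* Each probability of [Lambda_j] loses at most [eps], and [K P(X_n \in N)]
   is at most [2 K eps]; as [3 K eps <= 1], the total loss is at most [1]. *)
pose eps : R := (3 * K.+1)%:R^-1.
have eps_gt0 : 0 < eps by rewrite invr_gt0 ltr0n.
have [N [m [nN idxN Km]]] := exists_normal_large_index infG rfG (3 * K.+1).
have evLambda := eventually_all_lt K (fun j =>
  lazy_walk_prob_ge_inv_index k_gt0 gens_gen (normal_subgroup_Lambda G j) eps_gt0).
have [n0 ev] := eventually_and evLambda (lazy_walk_prob_cvg k_gt0 gens_gen nN idxN eps_gt0).
exists n0 => n /ev[Lambda_lo N_close].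
apply: lt_le_trans (lazy_walk_expect_D_ge R gens K n rfG nN).
have m_eps : m%:R^-1 <= eps.
  by rewrite lef_pV2 ?posrE ?ltr0n ?ler_nat // (leq_trans _ Km).
have K_eps : 3 * K%:R * eps <= 1.
  by rewrite -natrM /eps ler_pdivrMr ?ltr0n // mul1r ler_nat leq_mul2l ltnW.
have sum_lo : \sum_(2 <= j < K) ((gindex (@Lambda G j))%:R^-1 - eps)
    <= \sum_(2 <= j < K) lazy_walk_expect gens (indicator (@Lambda G j)) n.
  by apply: ler_sum_nat => j /andP[_ jK]; apply: Lambda_lo.
rewrite sumrB sumr_const_nat in sum_lo.
have Lambda_err : eps *+ (K - 2) <= K%:R * eps.
  by rewrite -[eps *+ _]mulr_natl ler_pM2r // ler_nat leq_subr.
have N_err : K%:R * lazy_walk_expect gens (indicator N) n <= K%:R * (2 * eps).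
  by rewrite ler_wpM2l ?ler0n //; move: N_close; rewrite ler_norml; lra.
lra.
Qed.
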